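(* (1) If $L\subseteq A^*$ is accepted by a nondeterministic finite automaton having depth $m$, then ${\uparrow}L$ is $m$-PT while ${\uparrow}_<L$ and $\min(L)$ are $(m+1)$-PT. (2) The same conclusions hold if $L$ is accepted by a context-free grammar, with $m=\ell^N$, where $N$ is the number of nonterminal symbols and $\ell$ is the maximum length of the right-hand sides of the production rules.
   Context: The depth of an automaton is the maximum length of a simple (non-repeating) path from an initial state to some final state. $u\sqsubseteq v$ (subword) means $u=a_1\cdots a_n$ with letters $a_i$ and $v=v_0a_1v_1\cdots a_nv_n$; $u\sqsubset v$ means $u\sqsubseteq v$ and $u\ne v$. ${\uparrow}L=\{v~|~\exists u\in L: u\sqsubseteq v\}$, ${\uparrow}_<L=\{v~|~\exists u\in L:u\sqsubset v\}$, $\min(L)=\{u\in L~|~\forall v\in L: v\not\sqsubset u\}$. $u\sim_n v$ iff $u,v$ have the same subwords of length at most $n$; $L$ is $n$-PT if it is a union of $\sim_n$-classes. *)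

From mathcomp Require Import all_boot.
Set Implicit Arguments. Unset Strict Implicit. Unset Printing Implicit Defensive.

(* Words over a finite alphabet A are [seq A]; the subword (scattered
   subsequence) order u ⊑ v is MathComp's [subseq u v]. Languages are
   predicates [seq A -> Prop]. *)

Section Words.
Variable A : finType.

Definition language := seq A -> Prop.

Definition strict_subword (u v : seq A) : Prop := subseq u v /\ u <> v.

Definition upward (L : language) : language :=
  fun v => exists u, L u /\ subseq u v.
Definition strict_upward (L : language) : language :=
  fun v => exists u, L u /\ strict_subword u v.
Definition minimal (L : language) : language :=
  fun u => L u /\ forall v, L v -> ~ strict_subword v u.

Definition simeq (n : nat) (u v : seq A) : Prop :=
  forall w : seq A, size w <= n -> subseq w u = subseq w v.

(* L is n-PT : a union of ~_n-classes, i.e. closed under ~_n *)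
Definition PT (n : nat) (L : language) : Prop :=
  forall u v, simeq n u v -> (L u <-> L v).
End Words.

Record nfa (A : finType) := NFA {
  nfa_state : finType;
  nfa_init : {set nfa_state};
  nfa_final : {set nfa_state};
  nfa_trans : nfa_state -> A -> nfa_state -> bool }.

Section NFA.
Variables (A : finType) (M : nfa A).

Fixpoint nfa_run (q : nfa_state M) (w : seq A) : bool :=
  match w with
  | [::] => q \in nfa_final M
  | a :: w' => [exists q' : nfa_state M, nfa_trans q a q' && nfa_run q' w']
  end.

Definition nfa_lang : language A :=
  fun w => exists2 q, q \in nfa_init M & nfa_run q w.

Definition nfa_edge (p q : nfa_state M) : bool := [exists a : A, nfa_trans p a q].

(* a simple (non-repeating) path q0 q1 ... qk from an initial to a final state;
   its length is k = size p *)
Definition simple_path (q0 : nfa_state M) (p : seq (nfa_state M)) : Prop :=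
  [/\ q0 \in nfa_init M, last q0 p \in nfa_final M,
      path nfa_edge q0 p & uniq (q0 :: p)].

Definition nfa_depth (m : nat) : Prop :=
  (exists q0 p, simple_path q0 p /\ size p = m) /\
  (forall q0 p, simple_path q0 p -> size p <= m).
End NFA.

Record cfg (A : finType) := CFG {
  cfg_nonterm : finType;
  cfg_start : cfg_nonterm;
  cfg_rules : seq (cfg_nonterm * seq (A + cfg_nonterm)) }.

Section CFG.
Variables (A : finType) (G : cfg A).

Inductive gen : (A + cfg_nonterm G) -> seq A -> Prop :=
| gen_term (a : A) : gen (inl a) [:: a]
| gen_rule (X : cfg_nonterm G) (rhs : seq (A + cfg_nonterm G)) (w : seq A) :
    (X, rhs) \in cfg_rules G -> gens rhs w -> gen (inr X) w
with gens : seq (A + cfg_nonterm G) -> seq A -> Prop :=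
| gens_nil : gens [::] [::]
| gens_cons s ss w ws : gen s w -> gens ss ws -> gens (s :: ss) (w ++ ws).

Definition cfg_lang : language A := gen (inr (cfg_start G)).

Definition cfg_maxrhs : nat := \max_(r <- cfg_rules G) size r.2.
Definition cfg_bound : nat := cfg_maxrhs ^ #|cfg_nonterm G|.
End CFG.

(* Everything follows from one property of L: every word of L has a subword in L of
   length at most m.  If u ~_m v and x ⊑ u with x ∈ L, a short y ⊑ x in L is a subword of
   length <= m of u, hence of v.  For ↑_<L one extends y to a subword of u of length
   |y|+1 <= m+1, which then lies in v as well; and a minimal word of L has length <= m, so
   ~_{m+1} pins it down exactly.  For an automaton of depth m, removing loops from an
   accepting run yields a subword with a simple accepting path, of length <= m.  For a
   grammar, replacing the subtree at an upper occurrence of a nonterminal by the subtree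
   at a lower occurrence on the same branch yields a subword; a derivation with no
   repetition along any branch has height <= N, hence a yield of length <= ℓ^N. *)

From mathcomp Require Import all_boot.
Set Implicit Arguments. Unset Strict Implicit. Unset Printing Implicit Defensive.

Section SubwordClosure.
Variable A : finType.
Implicit Types (L : language A) (u v w x y : seq A).

Definition subword_bounded L m :=
  forall w, L w -> exists2 x, subseq x w & L x /\ size x <= m.

Lemma simeq_sym n u v : simeq n u v -> simeq n v u.
Proof. by move=> uv w /uv ->. Qed.

Lemma PT_of_simeq_closed n L : (forall u v, simeq n u v -> L u -> L v) -> PT n L.
Proof. by move=> Lcl u v uv; split; apply: Lcl => //; apply: simeq_sym. Qed.

Lemma subseq_size_eq u v : subseq u v -> size v <= size u -> u = v.
Proof.
move=> uv vu; apply/eqP; rewrite -(size_subseq_leqif uv).2.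
by rewrite eqn_leq vu size_subseq.
Qed.

Lemma strict_subwordE u v : strict_subword u v <-> subseq u v /\ size u < size v.
Proof.
split=> [[uv neq]|[uv lt]]; last by split=> // eq; rewrite eq ltnn in lt.
split=> //; rewrite ltnNge; apply/negP => /(subseq_size_eq uv); exact: neq.
Qed.

Lemma subseq_grow x u : subseq x u -> size x < size u ->
  exists2 w, subseq x w & subseq w u /\ size w = (size x).+1.
Proof.
elim: u x => [|a u IH] x //= xau; case: (boolP (subseq x u)) => [xu|xNu].
  case: (ltnP (size x) (size u)) => [lt _|ge _].
    have [w xw [wu sw]] := IH x xu lt.
    by exists w => //; split=> //; apply: subseq_trans wu (subseq_cons u a).
  rewrite -(subseq_size_eq xu ge); exists (a :: x); first exact: subseq_cons.
  by rewrite /= eqxx subseq_refl.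
case: x xau xNu => [_|b x /=]; first by rewrite sub0seq.
case: eqP => [-> xu _ lt|_ -> //]; have [w xw [wu sw]] := IH x xu lt.
by exists (a :: w); rewrite /= ?eqxx ?sw.
Qed.

Lemma simeq_short_eq n u v : size u < n -> simeq n u v -> v = u.
Proof.
move=> lt uv; have uSv : subseq u v by rewrite -uv ?subseq_refl // ltnW.
apply/esym/(subseq_size_eq uSv); rewrite leqNgt; apply/negP => ltv.
have : subseq (take (size u).+1 v) u by rewrite uv ?take_subseq // size_takel.
by move/size_subseq; rewrite size_takel // ltnn.
Qed.

Section Bounded.
Variables (L : language A) (m : nat).
Hypothesis Lm : subword_bounded L m.

Lemma PT_upward : PT m (upward L).
Proof.
apply: PT_of_simeq_closed => u v uv [x [Lx xu]]; have [y yx [Ly ym]] := Lm Lx.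
by exists y; split; rewrite // -uv // (subseq_trans yx xu).
Qed.

Lemma PT_strict_upward : PT m.+1 (strict_upward L).
Proof.
apply: PT_of_simeq_closed => u v uv [x [Lx /strict_subwordE[xu ltxu]]].
have [y yx [Ly ym]] := Lm Lx.
have yu := subseq_trans yx xu; have ltyu := leq_ltn_trans (size_subseq yx) ltxu.
have [w yw [wu sw]] := subseq_grow yu ltyu.
have wv : subseq w v by rewrite -uv // sw.
exists y; split=> //; apply/strict_subwordE; split; first exact: subseq_trans yw wv.
by rewrite -sw size_subseq.
Qed.

Lemma minimal_size u : minimal L u -> size u <= m.
Proof.
move=> [Lu umin]; have [x xu [Lx xm]] := Lm Lu.
case: (eqVneq x u) => [<- //|neq]; case: (umin x Lx); split=> //; exact/eqP.
Qed.

Lemma PT_minimal : PT m.+1 (minimal L).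
Proof.
by apply: PT_of_simeq_closed => u v uv minu; rewrite (simeq_short_eq _ uv) ?ltnS ?minimal_size.
Qed.

Lemma subword_bounded_PT :
  [/\ PT m (upward L), PT m.+1 (strict_upward L) & PT m.+1 (minimal L)].
Proof. by split; [apply: PT_upward | apply: PT_strict_upward | apply: PT_minimal]. Qed.
End Bounded.
End SubwordClosure.

Section NFAWalks.
Variables (A : finType) (M : nfa A).
Notation state := (nfa_state M).
Implicit Types (q r : state) (p : seq state) (w : seq A).

Fixpoint nfa_walk q w p : bool :=
  match w, p with
  | [::], [::] => true
  | a :: w', r :: p' => nfa_trans q a r && nfa_walk r w' p'
  | _, _ => false
  end.

Lemma nfa_runP q w :
  nfa_run q w <-> exists2 p, nfa_walk q w p & last q p \in nfa_final M.
Proof.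
elim: w q => [|a w IH] q /=; first by split=> [qF|[[|r p] //]]; exists [::].
split=> [/existsP[r /andP[qr /IH[p rp pF]]]|[[|r p] //= /andP[qr rp] pF]].
  by exists (r :: p); rewrite /= ?qr.
by apply/existsP; exists r; rewrite qr; apply/IH; exists p.
Qed.

Lemma nfa_walk_size q w p : nfa_walk q w p -> size p = size w.
Proof. by elim: w q p => [|a w IH] q [|r p] //= /andP[_ /IH ->]. Qed.

Lemma nfa_walk_path q w p : nfa_walk q w p -> path (@nfa_edge _ M) q p.
Proof.
elim: w q p => [|a w IH] q [|r p] //= /andP[qr /IH ->].
by rewrite andbT; apply/existsP; exists a.
Qed.

Lemma nfa_walk_suffix q r w p1 p2 : nfa_walk q w (p1 ++ r :: p2) ->
  nfa_walk r (drop (size p1).+1 w) p2.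
Proof.
elim: p1 q w => [|s p1 IH] q [|a w] //= /andP[_]; first by rewrite drop0.
exact: IH.
Qed.

Definition simple_accept q w :=
  exists p, [&& nfa_walk q w p, last q p \in nfa_final M & uniq (q :: p)].

Lemma simple_accept_of_return q w p :
  nfa_walk q w p -> last q p \in nfa_final M -> uniq p -> q \in p ->
  exists2 w', subseq w' w & simple_accept q w'.
Proof.
move=> qp pF up qin; case/splitPr: qin qp pF up => p1 p2 qp pF up.
exists (drop (size p1).+1 w); first exact: drop_subseq.
exists p2; rewrite (nfa_walk_suffix qp).
by move: pF up; rewrite last_cat cat_uniq => -> /and3P[_ _ ->].
Qed.

Lemma nfa_run_simple_subword q w :
  nfa_run q w -> exists2 w', subseq w' w & simple_accept q w'.
Proof.
elim: w q => [|a w IH] q /=.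
  by move=> qF; exists [::] => //; exists [::]; rewrite /= qF.
case/existsP=> r /andP[qr /IH[w' w'w [p /and3P[rp pF up]]]].
have qw' : nfa_walk q (a :: w') (r :: p) by rewrite /= qr.
have aw'w : subseq (a :: w') (a :: w) by rewrite /= eqxx.
case: (boolP (q \in r :: p)) => [qp|qNp].
  have [w'' w''w simple] := simple_accept_of_return qw' pF up qp.
  by exists w'' => //; apply: subseq_trans w''w aw'w.
by exists (a :: w') => //; exists (r :: p); rewrite qw' /= pF qNp.
Qed.

Lemma simple_accept_size m q w :
  nfa_depth M m -> q \in nfa_init M -> simple_accept q w -> size w <= m.
Proof.
move=> [_ depth] qI [p /and3P[qp pF up]]; rewrite -(nfa_walk_size qp).
by apply: (depth q); split=> //; apply: nfa_walk_path qp.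
Qed.

Lemma nfa_lang_subword_bounded m :
  nfa_depth M m -> subword_bounded (nfa_lang M) m.
Proof.
move=> depth w [q qI /nfa_run_simple_subword[w' w'w simple]].
exists w' => //; split; last exact: simple_accept_size depth qI simple.
by have [p /and3P[qp pF _]] := simple; exists q => //; apply/nfa_runP; exists p.
Qed.
End NFAWalks.

Lemma sum_seq_leq_const (I : eqType) (r : seq I) (f : I -> nat) c :
  (forall i, i \in r -> f i <= c) -> \sum_(i <- r) f i <= size r * c.
Proof.
elim: r => [|i r IH] fc; first by rewrite big_nil.
rewrite big_cons mulSn leq_add ?fc ?mem_head // IH // => j jr.
by rewrite fc // inE jr orbT.
Qed.

Section CFGDerivations.
Variables (A : finType) (G : cfg A).
Notation nonterm := (cfg_nonterm G).
Notation symbol := (A + nonterm)%type.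
Implicit Types (V W : {set nonterm}) (X Y : nonterm) (s : symbol) (r : seq symbol) (w : seq A).

Scheme gen_mut := Induction for gen Sort Prop
  with gens_mut := Induction for gens Sort Prop.

(* [sgen V s w]: s derives w by a tree that uses no nonterminal of V and repeats no
   nonterminal along a branch (V collects the nonterminals above the current node). *)
Inductive sgen : {set nonterm} -> symbol -> seq A -> Prop :=
| sgen_term V a : sgen V (inl a) [:: a]
| sgen_rule V X rhs w : X \notin V -> (X, rhs) \in cfg_rules G ->
    sgens (X |: V) rhs w -> sgen V (inr X) w
with sgens : {set nonterm} -> seq symbol -> seq A -> Prop :=
| sgens_nil V : sgens V [::] [::]
| sgens_cons V s r w ws : sgen V s w -> sgens V r ws -> sgens V (s :: r) (w ++ ws).

Scheme sgen_mut := Induction for sgen Sort Prop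
  with sgens_mut := Induction for sgens Sort Prop.

Lemma sgen_gen V s w : sgen V s w -> gen s w.
Proof.
move=> h; apply: (@sgen_mut (fun _ s w _ => gen s w) (fun _ r w _ => gens r w)) h.
- by move=> *; constructor.
- by move=> V0 X rhs w0 _ Xrhs _; apply: gen_rule.
- by constructor.
- by move=> *; constructor.
Qed.

Lemma sgen_subset V W s w : W \subset V -> sgen V s w -> sgen W s w.
Proof.
move=> WV h; move: h W WV.
apply: (@sgen_mut (fun V s w _ => forall W, W \subset V -> sgen W s w)
                  (fun V r w _ => forall W, W \subset V -> sgens W r w)).
- by move=> *; constructor.
- move=> V0 X rhs w0 XV Xrhs _ IH W WV; apply: sgen_rule Xrhs _.
    by apply: contra XV; apply: subsetP.
  by apply: IH; rewrite setUS.
- by move=> *; constructor.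
- by move=> V0 s0 r0 w0 ws _ IH1 _ IH2 W WV; constructor; [apply: IH1 | apply: IH2].
Qed.

(* Either X occurs nowhere in the forest, or the subtree at its highest occurrence
   yields a subword. *)
Lemma sgens_cut X V r w : sgens V r w ->
  sgens (X |: V) r w \/ exists2 u, subseq u w & sgen V (inr X) u.
Proof.
apply: (@sgens_mut
  (fun V s w _ => sgen (X |: V) s w \/ exists2 u, subseq u w & sgen V (inr X) u)
  (fun V r w _ => sgens (X |: V) r w \/ exists2 u, subseq u w & sgen V (inr X) u)).
- by left; constructor.
- move=> V0 Y rhs w0 YV Yrhs rhsw0 IH.
  case: (eqVneq Y X) => [<-|YX].
    by right; exists w0; [apply: subseq_refl | apply: sgen_rule Yrhs rhsw0].
  case: IH => [rhsw0X|[u uw0 Xu]].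
    by left; apply: sgen_rule Yrhs _; rewrite ?in_setU1 ?(negbTE YX) // setUCA.
  by right; exists u => //; apply: sgen_subset Xu; apply: subsetUr.
- by left; constructor.
- move=> V0 s0 r0 w0 ws _ [s0w0|[u uw0 Xu]] _ [r0ws|[v vws Xv]].
  + by left; constructor.
  + by right; exists v => //; apply: subseq_trans vws (suffix_subseq _ _).
  + by right; exists u => //; apply: subseq_trans uw0 (prefix_subseq _ _).
  + by right; exists v => //; apply: subseq_trans vws (suffix_subseq _ _).
Qed.

Lemma gen_simple_subword s w : gen s w -> exists2 w', subseq w' w & sgen set0 s w'.
Proof.
move=> h; apply: (@gen_mut A G (fun s w _ => exists2 w', subseq w' w & sgen set0 s w')
  (fun r w _ => exists2 w', subseq w' w & sgens set0 r w')) h.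
- by move=> a; exists [:: a]; [apply: subseq_refl | constructor].
- move=> X rhs w0 Xrhs _ [w' w'w0 rhsw'].
  case: (sgens_cut X rhsw') => [rhsw'X|[u uw' Xu]].
    by exists w' => //; apply: sgen_rule Xrhs _; rewrite ?in_set0.
  by exists u => //; apply: subseq_trans uw' w'w0.
- by exists [::]; constructor.
- move=> s0 r0 w0 ws _ [w0' w0'w0 s0w0'] _ [ws' ws'ws r0ws'].
  by exists (w0' ++ ws'); [apply: cat_subseq | constructor].
Qed.

Definition symbol_bound V s : nat :=
  if s is inr _ then cfg_maxrhs G ^ #|~: V| else 1.

Lemma rule_symbol_bound V X rhs : X \notin V -> (X, rhs) \in cfg_rules G ->
  \sum_(s <- rhs) symbol_bound (X |: V) s <= cfg_maxrhs G ^ #|~: V|.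
Proof.
move=> XV Xrhs; have rhs_le : size rhs <= cfg_maxrhs G.
  exact: (@leq_bigmax_seq _ (cfg_rules G) xpredT (fun rule => size rule.2) _ Xrhs isT).
have cardV : #|~: V| = #|~: (X |: V)|.+1.
  by rewrite setCU (cardsD1 X) in_setC XV setIC -setDE.
rewrite cardV expnS; apply: leq_trans (leq_mul rhs_le (leqnn _)).
apply: sum_seq_leq_const => -[a|Y] //= srhs.
by rewrite expn_gt0 (leq_trans _ rhs_le) //; case: rhs srhs {Xrhs rhs_le}.
Qed.

Lemma sgen_size V s w : sgen V s w -> size w <= symbol_bound V s.
Proof.
apply: (@sgen_mut (fun V s w _ => size w <= symbol_bound V s)
  (fun V r w _ => size w <= \sum_(s <- r) symbol_bound V s)) => //.
- by move=> V0 X rhs w0 XV Xrhs _ IH; apply: leq_trans IH (rule_symbol_bound XV Xrhs).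
- by move=> V0 s0 r0 w0 ws _ IH1 _ IH2; rewrite size_cat big_cons leq_add.
Qed.

Lemma cfg_lang_subword_bounded : subword_bounded (cfg_lang G) (cfg_bound G).
Proof.
move=> w /gen_simple_subword[w' w'w Sw']; exists w' => //; split.
  exact: sgen_gen Sw'.
by move: (sgen_size Sw'); rewrite /= setC0 cardsT.
Qed.
End CFGDerivations.

Theorem theorem10 (A : finType) :
  (forall (M : nfa A) (m : nat), nfa_depth M m ->
     [/\ PT m (upward (nfa_lang M)),
         PT m.+1 (strict_upward (nfa_lang M)) &
         PT m.+1 (minimal (nfa_lang M))]) /\
  (forall (G : cfg A),
     [/\ PT (cfg_bound G) (upward (cfg_lang G)),
         PT (cfg_bound G).+1 (strict_upward (cfg_lang G)) &
         PT (cfg_bound G).+1 (minimal (cfg_lang G))]).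
Proof.
split=> [M m depth | G]; apply: subword_bounded_PT.
  exact: nfa_lang_subword_bounded.
exact: cfg_lang_subword_bounded.
Qed.
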